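(* Let $(G,v_G)$ be a rooted graph and let $g,h\ge 0$, $m\ge 2$ be integers. Let $K_m^{gh}(G,K_1)$ be the graph obtained from the disjoint union of $G$ and a complete graph $K_m$ with two distinct chosen vertices $x,y$ by adding a path of length $g$ joining $v_G$ and $x$ (identifying them if $g=0$) and attaching a pendant path of length $h$ at $y$. Then \[ \frac{X_{K_m^{gh}(G,K_1)}}{(m-2)!}=\sum_{z=1}^{m-1}z\,e_{m-1-z}\,X_{G^{g+h+z}}-(m-2)\sum_{z=1}^{m-1}\frac{X_{K_z^h}}{(z-1)!}\,X_{G^{m-1-z+g}}. \]
   Context: All graphs are finite simple graphs. The chromatic symmetric function of a graph $G$ is $X_G=\sum_{\kappa}\prod_{v\in V(G)}x_{\kappa(v)}$, where $\kappa$ ranges over proper colorings $\kappa:V(G)\to\{1,2,\dots\}$; $e_a$ is the $a$-th elementary symmetric function, $e_0=1$. For a rooted graph $G$ and $k\ge 0$, the tailed graph $G^k$ is $G$ with a pendant path of length $k$ (with $k$ new vertices) attached at its root. $K_z^h$ is the lollipop: the complete graph $K_z$ with a pendant path of length $h$ attached at one vertex. *)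

From HB Require Import structures.
From mathcomp Require Import all_boot all_order all_algebra.
From mathcomp Require Import mpoly.
Set Implicit Arguments. Unset Strict Implicit. Unset Printing Implicit Defensive.
Import GRing.Theory.
Local Open Scope ring_scope.

Definition proper (V : finType) (e : rel V) (n : nat) (k : {ffun V -> 'I_n}) : bool :=
  [forall u, forall v, e u v ==> (k u != k v)].

(* Truncation of the chromatic symmetric function X_G to n variables
   x_0..x_{n-1}: sum over proper colourings V -> 'I_n of prod_v x_{k v}.
   Two symmetric functions are equal iff all their truncations agree. *)
Definition chrom (V : finType) (e : rel V) (n : nat) : {mpoly rat[n]} :=
  \sum_(k : {ffun V -> 'I_n} | proper e k) \prod_(v : V) 'X_(k v).

(* tailed graph G^k: vertices V + 'I_k, path r - t_0 - t_1 - ... - t_{k-1} *)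
Definition tail_rel (V : finType) (e : rel V) (r : V) (k : nat) : rel (V + 'I_k) :=
  fun a b =>
    match a, b with
    | inl u, inl v => e u v
    | inl u, inr i => (u == r) && (val i == 0)%N
    | inr i, inl u => (u == r) && (val i == 0)%N
    | inr i, inr j => ((val i).+1 == val j) || ((val j).+1 == val i)
    end.

Arguments tail_rel {V} e r k.

Definition complete_rel (z : nat) : rel 'I_z := fun i j => i != j.

(* lollipop K_z^h, meaningful for z >= 1 (vertex type 'I_(z.-1.+1) = 'I_z
   then), pendant path attached at vertex 0 *)
Definition lollipop_rel (z h : nat) : rel ('I_z.-1.+1 + 'I_h) :=
  tail_rel (@complete_rel z.-1.+1) ord0 h.

(* K_m^{gh}(G,K_1), for m >= 2.  Vertex type
     (V + 'I_g) + ('I_(m-1) + 'I_h).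
   V + 'I_g is G^g (tail of length g at r); its endpoint w (r if g = 0,
   else t_{g-1}) plays the role of the vertex x of K_m.  'I_(m-1) are the
   other m-1 vertices of K_m; y is the one with index 0; 'I_h is the
   pendant path y - q_0 - ... - q_{h-1}. *)
Definition tail_end (V : finType) (r : V) (g : nat) (a : V + 'I_g) : bool :=
  match a with
  | inl u => (g == 0)%N && (u == r)
  | inr i => (val i == g.-1)%N
  end.

Definition Kgh_rel0 (V : finType) (e : rel V) (r : V) (g m h : nat)
  : rel ((V + 'I_g) + ('I_m.-1 + 'I_h)) :=
  fun a b =>
    match a, b with
    | inl a', inl b' => tail_rel e r g a' b'
    | inl a', inr (inl _) => @tail_end V r g a'
    | inr (inl i), inr (inl j) => i != j
    | inr (inl j), inr (inr q) => (val j == 0)%N && (val q == 0)%N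
    | inr (inr p), inr (inr q) => ((val p).+1 == val q) || ((val q).+1 == val p)
    | _, _ => false
    end.

Definition Kgh_rel (V : finType) (e : rel V) (r : V) (g m h : nat)
  : rel ((V + 'I_g) + ('I_m.-1 + 'I_h)) :=
  fun a b => @Kgh_rel0 V e r g m h a b || @Kgh_rel0 V e r g m h b a.
Arguments Kgh_rel {V} e r g m h.
Arguments lollipop_rel : clear implicits.

(* Work in n variables and colour the base graph G first.  With the walk operator
   (D f)(a) = \sum_(b != a) x_b f(b) on functions of a colour, D^k 1 (a) is the generating
   function of the proper colourings of a path of length k hanging at a vertex of colour a,
   and k! e_k(x outside S) that of the colourings of K_k avoiding the colours in S.  So
   X_(G^k), X_(K_z^h) and X_(K_m^(gh)(G,K_1)) are sums over the proper colourings of G;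
   for m = k + 2 the last one involves
     F_k f (a) = \sum_(b != a) x_b f(b) e_k(x outside {a, b}),   f = D^h 1,
   for the colours a, b of the two distinguished vertices x, y of K_m.  The theorem thus
   reduces to the identity
     F_k f = \sum_(i <= k) (i+1) e_(k-i) D^(i+1) f
             - k \sum_(i <= k) (\sum_b x_b f(b) e_i(x outside b)) D^(k-i) 1,
   proved by induction on k using e_(j+1)(x outside S) = e_(j+1)(x outside S+b)
   + x_b e_j(x outside S+b) and x_a f(a) = \sum_b x_b f(b) - (D f)(a). *)

From Pilot Require Import Defs.
From HB Require Import structures.
From mathcomp Require Import all_boot all_order all_algebra.
From mathcomp Require Import mpoly.
From mathcomp Require Import ring zify.
Set Implicit Arguments. Unset Strict Implicit. Unset Printing Implicit Defensive.
Import GRing.Theory.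
Local Open Scope ring_scope.

(* fintype's [proper] (strict inclusion) would otherwise shadow the colouring predicate. *)
Local Notation proper := Defs.proper.

Section EsymOut.
Variable n : nat.
Local Notation R := {mpoly rat[n]}.
Implicit Types (S : {set 'I_n}) (b : 'I_n) (k : nat).

Definition esym_out S k : R :=
  \sum_(h : {set 'I_n} | (h \subset ~: S) && (#|h| == k)) \prod_(i in h) 'X_i.

Lemma esym_out0 S : esym_out S 0 = 1.
Proof.
rewrite /esym_out (bigD1 set0) /=; last by rewrite sub0set cards0.
rewrite big_set0 big1 ?addr0 // => h /andP[/andP[_ /eqP /cards0_eq ->]].
by rewrite eqxx.
Qed.

Lemma mesym_esym_out k : mesym n rat k = esym_out set0 k.
Proof. by apply: eq_bigl => h; rewrite setC0 subsetT. Qed.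

Lemma esym_out_mem S b k : b \notin S ->
  \sum_(h : {set 'I_n} | (h \subset ~: S) && (#|h| == k.+1) && (b \in h))
     \prod_(i in h) 'X_i = 'X_b * esym_out (b |: S) k.
Proof.
move=> bS; rewrite /esym_out mulr_sumr.
rewrite (reindex_onto (fun h => b |: h) (fun h => h :\ b)); last first.
  by move=> h /andP[_ bh]; rewrite setD1K.
apply: eq_big => [h|h /andP[_ /eqP <-]]; last by rewrite big_setU1 // !inE eqxx.
have -> : ~: (b |: S) = ~: S :\ b by rewrite setCU setIC -setDE.
rewrite subsetD1 setU11 andbT; case bh: (b \in h); rewrite ?andbF ?andbT.
  apply/negbTE/negP => /andP[_ /eqP hb].
  by move: bh; rewrite -hb !inE eqxx.
by rewrite setU1K ?bh // eqxx andbT cardsU1 bh subUset sub1set inE bS.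
Qed.

Lemma esym_outU1 S b k : b \notin S ->
  esym_out S k.+1 = esym_out (b |: S) k.+1 + 'X_b * esym_out (b |: S) k.
Proof.
move=> bS; rewrite -esym_out_mem // [esym_out S _]/esym_out.
rewrite (bigID (fun h : {set 'I_n} => b \in h)) /= addrC.
congr (_ + _); apply: eq_bigl => h.
have -> : ~: (b |: S) = ~: S :\ b by rewrite setCU setIC -setDE.
by rewrite subsetD1 andbAC.
Qed.

Lemma sum_esym_outU1 S k :
  \sum_(b | b \notin S) 'X_b * esym_out (b |: S) k = esym_out S k.+1 *+ k.+1.
Proof.
under eq_bigr => b bS do rewrite -esym_out_mem //.
rewrite (exchange_big_dep (fun h : {set 'I_n} => (h \subset ~: S) && (#|h| == k.+1))) /=;
  last by move=> b h _ /andP[].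
rewrite /esym_out -sumrMnl; apply: eq_bigr => h /andP[sub /eqP c].
rewrite sumr_const -c; congr (_ *+ _); apply: eq_card => i.
rewrite unfold_in /= sub eqxx /=.
case ih: (i \in h); rewrite ?andbF ?andbT //.
by move: (subsetP sub i ih); rewrite !inE.
Qed.

End EsymOut.

Local Notation esym k := (esym_out set0 k).

Section Walks.
Variable n : nat.
Local Notation R := {mpoly rat[n]}.
Implicit Types (f g : 'I_n -> R) (a b : 'I_n) (k M : nat).

Definition walk f a : R := \sum_(b | b != a) 'X_b * f b.
Definition walkn k f : 'I_n -> R := iter k walk f.
Definition xsum f : R := \sum_b 'X_b * f b.
Definition xmul f : 'I_n -> R := fun a => 'X_a * f a.
Definition xsum_esym f k : R := \sum_b 'X_b * f b * esym_out [set b] k.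

Lemma walkn0 f a : walkn 0 f a = f a.
Proof. by []. Qed.

Lemma walkn1 f a : walkn 1 f a = walk f a.
Proof. by []. Qed.

Lemma walknS k f a : walkn k.+1 f a = walk (walkn k f) a.
Proof. by []. Qed.

Lemma walkn_walkn i j f a : walkn i (walkn j f) a = walkn (i + j) f a.
Proof. by rewrite /walkn iterD. Qed.

Lemma eq_walkn k f g a : f =1 g -> walkn k f a = walkn k g a.
Proof.
move=> fg; elim: k a => [|k IH] a; first exact: fg.
by rewrite !walknS /walk; apply: eq_bigr => b _; rewrite IH.
Qed.

Lemma walknB k f g a : walkn k (fun b => f b - g b) a = walkn k f a - walkn k g a.
Proof.
elim: k a => [//|k IH] a; rewrite !walknS /walk -sumrB.
by apply: eq_bigr => b _; rewrite IH mulrBr.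
Qed.

Lemma walknZ k (c : R) f a : walkn k (fun b => c * f b) a = c * walkn k f a.
Proof.
elim: k a => [//|k IH] a; rewrite !walknS /walk mulr_sumr.
by apply: eq_bigr => b _; rewrite IH mulrCA.
Qed.

Lemma walknMn k N f a : walkn k (fun b => f b *+ N) a = walkn k f a *+ N.
Proof. by rewrite -mulr_natl -walknZ; apply: eq_walkn => b; rewrite mulr_natl. Qed.

Lemma walkn_sum k (I : finType) (F : I -> 'I_n -> R) a :
  walkn k (fun b => \sum_i F i b) a = \sum_i walkn k (F i) a.
Proof.
elim: k a => [//|k IH] a; rewrite walknS /walk.
under eq_bigr do rewrite IH mulr_sumr; rewrite exchange_big.
by apply: eq_bigr => i _; rewrite walknS.
Qed.

Lemma xmul_walk f a : 'X_a * f a = xsum f - walk f a.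
Proof. by rewrite /xsum (bigD1 a) //= addrK. Qed.

Lemma xmul_walkn c k f a :
  'X_a * (c * walkn k f a) = c * xsum (walkn k f) - c * walkn k.+1 f a.
Proof. by rewrite mulrCA xmul_walk mulrBr. Qed.

Lemma esym_out1S a k :
  'X_a * esym_out [set a] k = esym k.+1 - esym_out [set a] k.+1.
Proof. by rewrite (esym_outU1 k (_ : a \notin set0)) ?inE // setU0 addrC addKr. Qed.

Lemma esym_out2S a b k : b != a ->
  'X_b * esym_out [set a; b] k = esym_out [set a] k.+1 - esym_out [set a; b] k.+1.
Proof.
by move=> ba; rewrite (esym_outU1 k (_ : b \notin [set a])) ?inE // setUC addrC addKr.
Qed.

Lemma xsum_esym_out1 k : xsum (fun a => esym_out [set a] k) = esym k.+1 *+ k.+1.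
Proof.
by rewrite -sum_esym_outU1; apply: eq_big => b; rewrite ?inE ?setU0.
Qed.

Lemma xsum_esym_out1_walk f M :
  xsum (fun a => esym_out [set a] M * walk f a) = esym M.+1 *+ M * xsum f + xsum_esym f M.+1.
Proof.
have others b : \sum_(a | a != b) 'X_a * esym_out [set a] M
                = esym M.+1 *+ M + esym_out [set b] M.+1.
  have := xsum_esym_out1 M; rewrite /xsum (bigD1 b) //= esym_out1S mulrS => E.
  by apply: (addrI (esym M.+1 - esym_out [set b] M.+1)); rewrite E; ring.
rewrite /xsum /walk; under eq_bigr => a _ do rewrite mulrA mulr_sumr.
rewrite (exchange_big_dep xpredT) //= /xsum_esym mulr_sumr -big_split /=.
apply: eq_bigr => b _; rewrite -mulr_suml (eq_bigl (fun a => a != b)) => [|a].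
  by rewrite others; ring.
by rewrite eq_sym.
Qed.

End Walks.

Arguments walkn : simpl never.

Section WalkExpansion.
Variable n : nat.
Local Notation R := {mpoly rat[n]}.
Implicit Types (f : 'I_n -> R) (a : 'I_n) (M : nat).

(* [ev j g] stands for an evaluation of [walkn j g]: at a colour, summed against the
   variables, or one step further, the three instances related in [esym_out1_walk]. *)
Definition walk_expansion (ev : nat -> ('I_n -> R) -> R) f M : R :=
  \sum_(i < M.+1) esym (M - i) * ev i.+1 f
  - \sum_(i < M) xsum_esym f i.+1 * ev (M.-1 - i)%N (fun=> 1)
  - xsum f * \sum_(i < M) ((M.-1 - i)%:R * esym (M - i) * ev i (fun=> 1)).

Lemma walk_expansionS ev f M :
  walk_expansion ev f M.+1 =
    esym M.+1 * ev 1%N f + walk_expansion (fun j => ev j.+1) f M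
    - xsum_esym f M.+1 * ev 0%N (fun=> 1) - xsum f * (M%:R * esym M.+1 * ev 0%N (fun=> 1)).
Proof.
rewrite /walk_expansion big_ord_recl subn0 [X in _ - X - _]big_ord_recr subnn.
rewrite [X in _ - _ - _ * X]big_ord_recl /= subn0.
have -> : \sum_(i < M) xsum_esym f i.+1 * ev (M - i)%N (fun=> 1)
        = \sum_(i < M) xsum_esym f i.+1 * ev (M.-1 - i).+1%N (fun=> 1).
  by apply: eq_bigr => i _; congr (_ * ev _ _); have := ltn_ord i; lia.
have -> : \sum_(i < M) (M - bump 0 i)%:R * esym (M.+1 - bump 0 i) * ev (bump 0 i) (fun=> 1)
        = \sum_(i < M) (M.-1 - i)%:R * esym (M - i) * ev i.+1 (fun=> 1).
  by apply: eq_bigr => i _; rewrite /bump /= add1n subSS; congr (_%:R * _ * _); lia.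
ring.
Qed.

Lemma walk_expansion_xmul a f M :
  'X_a * walk_expansion (fun j g => walkn j g a) f M =
    walk_expansion (fun j g => xsum (walkn j g)) f M
    - walk_expansion (fun j g => walkn j.+1 g a) f M.
Proof.
rewrite /walk_expansion !mulrBr !mulr_sumr.
under eq_bigr do rewrite xmul_walkn.
under [X in _ - X - _]eq_bigr do rewrite xmul_walkn.
under [X in _ - _ - X]eq_bigr do rewrite mulrCA xmul_walkn mulrBr.
by rewrite !sumrB; ring.
Qed.

Lemma xsum_walk_expansion f M :
  xsum (fun a => walk_expansion (fun j g => walkn j g a) f M) =
    walk_expansion (fun j g => xsum (walkn j g)) f M.
Proof.
have xsum_comb m (c : 'I_m -> R) (u : 'I_m -> 'I_n -> R) :
    \sum_a 'X_a * \sum_(i < m) c i * u i a = \sum_(i < m) c i * xsum (u i).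
  under eq_bigr do rewrite mulr_sumr; rewrite exchange_big.
  by apply: eq_bigr => i _; rewrite /xsum mulr_sumr; apply: eq_bigr => a _; ring.
rewrite /xsum /walk_expansion; under eq_bigr do rewrite !mulrBr [_ * (xsum f * _)]mulrCA.
by rewrite !sumrB -mulr_sumr !xsum_comb.
Qed.

Lemma esym_out1_walk f M a :
  esym_out [set a] M * walk f a = walk_expansion (fun j g => walkn j g a) f M.
Proof.
elim: M a => [|M IH] a.
  by rewrite /walk_expansion !big_ord0 big_ord1 !esym_out0 mulr0 !subr0.
have xsum_step : walk_expansion (fun j g => xsum (walkn j g)) f M
                 = esym M.+1 *+ M * xsum f + xsum_esym f M.+1.
  rewrite -xsum_walk_expansion -xsum_esym_out1_walk.
  by apply: eq_bigr => b _; rewrite IH.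
have -> : esym_out [set a] M.+1 = esym M.+1 - 'X_a * esym_out [set a] M.
  by rewrite esym_out1S subKr.
rewrite mulrBl -mulrA IH walk_expansion_xmul xsum_step walk_expansionS.
by rewrite walkn1 walkn0 mulr_natl; ring.
Qed.

End WalkExpansion.

Section WalkEsym.
Variable n : nat.
Local Notation R := {mpoly rat[n]}.
Implicit Types (f : 'I_n -> R) (a b : 'I_n) (k : nat).

Definition walk_esym f k a : R :=
  \sum_(b | b != a) 'X_b * f b * esym_out [set a; b] k.

Definition walk_esym_formula f k a : R :=
  \sum_(i < k.+1) i.+1%:R * esym (k - i) * walkn i.+1 f a
  - k%:R * \sum_(i < k.+1) xsum_esym f i * walkn (k - i) (fun=> 1) a.

Lemma walkn_xmul f j a :
  walkn j (xmul f) a = xsum f * walkn j (fun=> 1) a - walkn j.+1 f a.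
Proof.
elim: j a => [|j IH] a; first by rewrite walknS !walkn0 /xmul xmul_walk mulr1.
rewrite walknS /walk; under eq_bigr => b _ do rewrite IH mulrBr mulrCA.
by rewrite sumrB -mulr_sumr.
Qed.

Lemma xsum_esym_xmul f i : xsum_esym (xmul f) i = esym i.+1 * xsum f - xsum_esym f i.+1.
Proof.
rewrite /xsum_esym /xsum /xmul mulr_sumr -sumrB; apply: eq_bigr => b _.
rewrite (_ : _ * _ * esym_out _ i = 'X_b * f b * ('X_b * esym_out [set b] i)).
  by rewrite esym_out1S; ring.
by ring.
Qed.

Lemma xsum_esym0 f : xsum_esym f 0 = xsum f.
Proof. by apply: eq_bigr => b _; rewrite esym_out0 mulr1. Qed.

Lemma walk_esymS f k a :
  walk_esym f k.+1 a = esym_out [set a] k.+1 * walk f a - walk_esym (xmul f) k a.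
Proof.
rewrite /walk_esym /walk mulr_sumr -sumrB; apply: eq_bigr => b ba.
rewrite /xmul (_ : _ * _ * esym_out _ k = 'X_b * f b * ('X_b * esym_out [set a; b] k)).
  by rewrite esym_out2S //; ring.
by ring.
Qed.

Lemma walk_esym_formula_xmul f k a :
  walk_esym_formula (xmul f) k a =
    xsum f * (\sum_(i < k.+1) i.+1%:R * esym (k - i) * walkn i.+1 (fun=> 1) a
              - k%:R * \sum_(i < k.+1) esym (k.+1 - i) * walkn i (fun=> 1) a)
    - \sum_(i < k.+1) i.+1%:R * esym (k - i) * walkn i.+2 f a
    + k%:R * \sum_(i < k.+1) xsum_esym f i.+1 * walkn (k - i) (fun=> 1) a.
Proof.
have rev : \sum_(i < k.+1) esym i.+1 * walkn (k - i) (fun=> 1) a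
           = \sum_(i < k.+1) esym (k.+1 - i) * walkn i (fun=> 1) a.
  rewrite (reindex_inj rev_ord_inj) /=; apply: eq_bigr => i _.
  by congr (esym _ * walkn _ _ _); have := ltn_ord i; lia.
rewrite /walk_esym_formula -rev.
have -> : \sum_(i < k.+1) i.+1%:R * esym (k - i) * walkn i.+1 (xmul f) a
  = xsum f * \sum_(i < k.+1) i.+1%:R * esym (k - i) * walkn i.+1 (fun=> 1) a
    - \sum_(i < k.+1) i.+1%:R * esym (k - i) * walkn i.+2 f a.
  by rewrite mulr_sumr -sumrB; apply: eq_bigr => i _; rewrite walkn_xmul; ring.
have -> : \sum_(i < k.+1) xsum_esym (xmul f) i * walkn (k - i) (fun=> 1) a
  = xsum f * \sum_(i < k.+1) esym i.+1 * walkn (k - i) (fun=> 1) a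
    - \sum_(i < k.+1) xsum_esym f i.+1 * walkn (k - i) (fun=> 1) a.
  by rewrite mulr_sumr -sumrB; apply: eq_bigr => i _; rewrite xsum_esym_xmul; ring.
ring.
Qed.

Lemma walk_esym_formulaS f k a :
  walk_esym_formula f k.+1 a =
    esym k.+1 * walk f a
    + \sum_(i < k.+1) i.+2%:R * esym (k - i) * walkn i.+2 f a
    - k.+1%:R * (xsum f * walkn k.+1 (fun=> 1) a
                 + \sum_(i < k.+1) xsum_esym f i.+1 * walkn (k - i) (fun=> 1) a).
Proof.
rewrite /walk_esym_formula big_ord_recl [X in _ - _ * X]big_ord_recl xsum_esym0 subn0.
under eq_bigr do rewrite lift0 subSS.
under [X in _ - _ * (_ + X)]eq_bigr do rewrite lift0 subSS.
by rewrite walkn1 mul1r; ring.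
Qed.

Lemma walk_esym_formula_step f k a :
  walk_esym_formula f k.+1 a + walk_esym_formula (xmul f) k a =
    walk_expansion (fun j g => walkn j g a) f k.+1.
Proof.
have shift : \sum_(i < k.+1) i.+1%:R * esym (k - i) * walkn i.+1 (fun=> 1) a
  = \sum_(i < k.+1) i%:R * esym (k.+1 - i) * walkn i (fun=> 1) a
    + k.+1%:R * walkn k.+1 (fun=> 1) a.
  rewrite big_ord_recr big_ord_recl /= subnn esym_out0 mul0r mul0r add0r mulr1.
  by congr (_ + _); apply: eq_bigr => i _; rewrite /bump /= add1n subSS.
have weights : \sum_(i < k.+1) (k - i)%:R * esym (k.+1 - i) * walkn i (fun=> 1) a
  = k%:R * \sum_(i < k.+1) esym (k.+1 - i) * walkn i (fun=> 1) a
    - \sum_(i < k.+1) i%:R * esym (k.+1 - i) * walkn i (fun=> 1) a.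
  rewrite mulr_sumr -sumrB; apply: eq_bigr => i _.
  by rewrite natrB ?mulrBl ?mulrA // -ltnS.
rewrite walk_esym_formula_xmul walk_esym_formulaS shift /walk_expansion.
rewrite [X in _ = X - _ - _]big_ord_recl subn0 weights walkn1 [k.+1.-1]/=.
have -> : \sum_(i < k.+1) esym (k.+1 - lift ord0 i) * walkn (lift ord0 i).+1 f a
        = \sum_(i < k.+1) esym (k - i) * walkn i.+2 f a.
  by apply: eq_bigr => i _; rewrite lift0 subSS.
have -> : \sum_(i < k.+1) i.+2%:R * esym (k - i) * walkn i.+2 f a
        = \sum_(i < k.+1) i.+1%:R * esym (k - i) * walkn i.+2 f a
          + \sum_(i < k.+1) esym (k - i) * walkn i.+2 f a.
  by rewrite -big_split /=; apply: eq_bigr => i _; rewrite [i.+2%:R]mulrSr; ring.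
ring.
Qed.

Lemma walk_esymE k f a : walk_esym f k a = walk_esym_formula f k a.
Proof.
elim: k f a => [|k IH] f a.
  rewrite /walk_esym_formula big_ord1 mul0r subr0 esym_out0 mulr1 mul1r walkn1.
  by apply: eq_bigr => b _; rewrite esym_out0 mulr1.
by rewrite walk_esymS IH esym_out1_walk -walk_esym_formula_step addrK.
Qed.

End WalkEsym.

Definition fjoin (A B T : finType) (k1 : {ffun A -> T}) (k2 : {ffun B -> T})
  : {ffun A + B -> T} :=
  [ffun x => match x with inl a => k1 a | inr b => k2 b end].

Definition fcons (T : finType) k (x : T) (t : {ffun 'I_k -> T}) : {ffun 'I_k.+1 -> T} :=
  [ffun i => if unlift ord0 i is Some j then t j else x].

Lemma fcons0 (T : finType) k (x : T) (t : {ffun 'I_k -> T}) : fcons x t ord0 = x.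
Proof. by rewrite ffunE unlift_none. Qed.

Lemma fconsS (T : finType) k (x : T) (t : {ffun 'I_k -> T}) j : fcons x t (lift ord0 j) = t j.
Proof. by rewrite ffunE liftK. Qed.

Section SplitSums.
Variable R : nmodType.

Lemma sum_fjoin (A B T : finType) (F : {ffun A + B -> T} -> R) :
  \sum_k F k = \sum_(k1 : {ffun A -> T}) \sum_(k2 : {ffun B -> T}) F (fjoin k1 k2).
Proof.
rewrite pair_big (reindex (fun p : {ffun A -> T} * {ffun B -> T} => fjoin p.1 p.2)) //.
exists (fun k : {ffun A + B -> T} => ([ffun a => k (inl a)], [ffun b => k (inr b)]))
  => [[k1 k2] _|k _].
  by congr (_, _); apply/ffunP => x; rewrite !ffunE.
by apply/ffunP => -[a|b]; rewrite !ffunE.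
Qed.

Lemma sum_fcons (T : finType) k (F : {ffun 'I_k.+1 -> T} -> R) :
  \sum_t F t = \sum_(x : T) \sum_(t : {ffun 'I_k -> T}) F (fcons x t).
Proof.
rewrite pair_big (reindex (fun p : T * {ffun 'I_k -> T} => fcons p.1 p.2)) //.
exists (fun t : {ffun 'I_k.+1 -> T} => (t ord0, [ffun j => t (lift ord0 j)]))
  => [[x t] _|t _].
  by congr (_, _); [rewrite fcons0 | apply/ffunP => j; rewrite ffunE fconsS].
by apply/ffunP => i; rewrite ffunE; case: unliftP => [j ->|->] //=; rewrite ffunE.
Qed.

Lemma sum_ffun0 (T : finType) (F : {ffun 'I_0 -> T} -> R) :
  \sum_t F t = F (ffun0 (card_ord 0)).
Proof.
rewrite (big_pred1 (ffun0 (card_ord 0))) // => t /=.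
by symmetry; apply/eqP/ffunP => -[].
Qed.

End SplitSums.

Lemma scale_invfact_mulrn n N (p : {mpoly rat[n]}) : ((N`!%:R : rat)^-1) *: (p *+ N`!) = p.
Proof.
rewrite -scalerMnr scalerMnl -mulr_natr mulVf ?scale1r //.
by rewrite Num.Theory.pnatr_eq0 -lt0n fact_gt0.
Qed.

Section Colourings.
Variable n : nat.
Local Notation R := {mpoly rat[n]}.

Definition weight (A : finType) (k : {ffun A -> 'I_n}) : R := \prod_v 'X_(k v).

Lemma chromE (V : finType) (e : rel V) : chrom e n = \sum_(k | proper e k) weight k.
Proof. by []. Qed.

Lemma weight_fjoin (A B : finType) (k1 : {ffun A -> 'I_n}) (k2 : {ffun B -> 'I_n}) :
  weight (fjoin k1 k2) = weight k1 * weight k2.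
Proof. by rewrite /weight big_sumType; congr (_ * _); apply: eq_bigr => v _; rewrite ffunE. Qed.

Lemma weight_fcons k (x : 'I_n) (t : {ffun 'I_k -> 'I_n}) :
  weight (fcons x t) = 'X_x * weight t.
Proof.
rewrite /weight big_ord_recl fcons0; congr (_ * _).
by apply: eq_bigr => j _; rewrite fconsS.
Qed.

Lemma weight_ffun0 (t : {ffun 'I_0 -> 'I_n}) : weight t = 1.
Proof. by rewrite /weight big_ord0. Qed.

Lemma properP (T : finType) (E : rel T) (k : {ffun T -> 'I_n}) :
  reflect (forall u v, E u v -> k u != k v) (proper E k).
Proof.
apply: (iffP forallP) => [Pk u v Euv|Pk u].
  by have /forallP/(_ v)/implyP := Pk u; apply.
by apply/forallP => v; apply/implyP; apply: Pk.
Qed.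

Lemma eq_proper (T : finType) (E E' : rel T) (k : {ffun T -> 'I_n}) :
  E =2 E' -> proper E k = proper E' k.
Proof. by move=> EE'; apply: eq_forallb => u; apply: eq_forallb => v; rewrite EE'. Qed.

Lemma proper_sym_closure (T : finType) (E : rel T) (k : {ffun T -> 'I_n}) :
  proper (fun x y => E x y || E y x) k = proper E k.
Proof.
apply/properP/properP => Pk u v Euv; first by apply: Pk; rewrite Euv.
by case/orP: Euv => /Pk //; rewrite eq_sym.
Qed.

Lemma proper_fjoin (A B : finType) (E : rel (A + B)) (k1 : {ffun A -> 'I_n})
    (k2 : {ffun B -> 'I_n}) :
  proper E (fjoin k1 k2) = [&& proper (fun x y => E (inl x) (inl y)) k1,
      proper (fun x y => E (inr x) (inr y)) k2 &
      [forall a, forall b, (E (inl a) (inr b) || E (inr b) (inl a)) ==> (k1 a != k2 b)]].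
Proof.
apply/idP/idP.
  move/properP => Pk; apply/and3P; split.
  - by apply/properP => x y /Pk; rewrite !ffunE.
  - by apply/properP => x y /Pk; rewrite !ffunE.
  - apply/forallP => a; apply/forallP => b; apply/implyP => /orP[/Pk|/Pk];
      by rewrite !ffunE // eq_sym.
case/and3P => /properP P1 /properP P2 /forallP P12.
apply/properP => -[x|x] [y|y]; rewrite !ffunE => Exy.
- exact: P1.
- by have /forallP/(_ y)/implyP := P12 x; apply; rewrite Exy.
- by rewrite eq_sym; have /forallP/(_ x)/implyP := P12 y; apply; rewrite Exy orbT.
- exact: P2.
Qed.

Definition path_rel k : rel 'I_k := fun i j => (val i).+1 == val j.

Definition proper_path k (c : 'I_n) (t : {ffun 'I_k -> 'I_n}) : bool :=
  proper (@path_rel k) t && [forall i, (val i == 0)%N ==> (t i != c)].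

Definition proper_clique k (S : {set 'I_n}) (c : {ffun 'I_k -> 'I_n}) : bool :=
  proper (@complete_rel k) c && [forall i, c i \notin S].

Lemma proper_path_fcons k (c d : 'I_n) (t : {ffun 'I_k -> 'I_n}) :
  proper_path c (fcons d t) = (d != c) && proper_path d t.
Proof.
apply/idP/idP => [/andP[/properP Pt /forallP Pc]|/and3P[dc /properP Pt /forallP Pd]].
  apply/and3P; split.
  - by have := Pc ord0; rewrite fcons0.
  - by apply/properP => i j ij; have := Pt (lift ord0 i) (lift ord0 j) ij; rewrite !fconsS.
  - apply/forallP => i; apply/implyP => /eqP i0; rewrite eq_sym.
    by have := Pt ord0 (lift ord0 i); rewrite fcons0 fconsS; apply; rewrite /path_rel /= i0.
apply/andP; split.
  apply/properP => i j; case: (unliftP ord0 i) => [i' ->|->];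
    case: (unliftP ord0 j) => [j' ->|->] //; rewrite ?fcons0 ?fconsS //.
  - by apply: Pt.
  - by rewrite eq_sym => ij; have /implyP := Pd j'; apply; rewrite eq_sym.
apply/forallP => i; apply/implyP.
by case: (unliftP ord0 i) => [i' ->|->] //; rewrite fcons0.
Qed.

Lemma proper_clique_fcons k (S : {set 'I_n}) (b : 'I_n) (c : {ffun 'I_k -> 'I_n}) :
  proper_clique S (fcons b c) = (b \notin S) && proper_clique (b |: S) c.
Proof.
apply/idP/idP => [/andP[/properP Pc /forallP PS]|/and3P[bS /properP Pc /forallP PbS]].
  apply/and3P; split.
  - by have := PS ord0; rewrite fcons0.
  - apply/properP => u v uv; have := Pc (lift ord0 u) (lift ord0 v).
    by rewrite !fconsS; apply; rewrite /complete_rel (inj_eq lift_inj).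
  - apply/forallP => i; rewrite !inE negb_or; have := PS (lift ord0 i).
    rewrite fconsS => ->; rewrite andbT; have := Pc (lift ord0 i) ord0.
    by rewrite fcons0 fconsS; apply; rewrite /complete_rel eq_sym neq_lift.
have PbS' i : (c i != b) && (c i \notin S) by have := PbS i; rewrite !inE negb_or.
apply/andP; split.
  apply/properP => u v; case: (unliftP ord0 u) => [u' ->|->];
    case: (unliftP ord0 v) => [v' ->|->]; rewrite ?fcons0 ?fconsS ?eqxx //.
  - by rewrite /complete_rel (inj_eq lift_inj); apply: Pc.
  - by case/andP: (PbS' u').
  - by case/andP: (PbS' v'); rewrite eq_sym.
apply/forallP => i; case: (unliftP ord0 i) => [i' ->|->]; rewrite ?fcons0 ?fconsS //.
by case/andP: (PbS' i').
Qed.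

Definition path_end k (c : 'I_n) : {ffun 'I_k -> 'I_n} -> 'I_n :=
  if k is k'.+1 then fun t => t ord_max else fun=> c.

Lemma path_end_fcons k (c d : 'I_n) (t : {ffun 'I_k -> 'I_n}) :
  path_end c (fcons d t) = path_end d t.
Proof.
case: k t => [|k] t /=; first by rewrite (_ : ord_max = ord0) ?fcons0 //; apply/val_inj.
by rewrite (_ : ord_max = lift ord0 ord_max) ?fconsS //; apply/val_inj.
Qed.

Lemma sum_proper_path_fcons k (c : 'I_n) (F : {ffun 'I_k.+1 -> 'I_n} -> R) :
  \sum_(t | proper_path c t) F t =
    \sum_(d | d != c) \sum_(t : {ffun 'I_k -> 'I_n} | proper_path d t) F (fcons d t).
Proof.
rewrite big_mkcond sum_fcons [RHS]big_mkcond; apply: eq_bigr => d _.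
under eq_bigr do rewrite proper_path_fcons.
by case: (d != c) => /=; [rewrite [RHS]big_mkcond | rewrite big1].
Qed.

Lemma sum_proper_clique_fcons k (S : {set 'I_n}) (F : {ffun 'I_k.+1 -> 'I_n} -> R) :
  \sum_(c | proper_clique S c) F c =
    \sum_(b | b \notin S)
      \sum_(c : {ffun 'I_k -> 'I_n} | proper_clique (b |: S) c) F (fcons b c).
Proof.
rewrite big_mkcond sum_fcons [RHS]big_mkcond; apply: eq_bigr => b _.
under eq_bigr do rewrite proper_clique_fcons.
by case: (b \notin S) => /=; [rewrite [RHS]big_mkcond | rewrite big1].
Qed.

Lemma sum_proper_path k (ph : 'I_n -> R) (c : 'I_n) :
  \sum_(t : {ffun 'I_k -> 'I_n} | proper_path c t) weight t * ph (path_end c t) = walkn k ph c.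
Proof.
elim: k c => [|k IH] c.
  rewrite big_mkcond sum_ffun0 weight_ffun0 mul1r walkn0.
  by rewrite (_ : proper_path _ _) //; apply/andP; split; apply/forallP => -[].
rewrite sum_proper_path_fcons walknS; apply: eq_bigr => d _.
under eq_bigr do rewrite weight_fcons path_end_fcons -mulrA.
by rewrite -mulr_sumr IH.
Qed.

Lemma sum_proper_clique k (S : {set 'I_n}) :
  \sum_(c : {ffun 'I_k -> 'I_n} | proper_clique S c) weight c = esym_out S k *+ k`!.
Proof.
elim: k S => [|k IH] S.
  rewrite big_mkcond sum_ffun0 weight_ffun0 esym_out0.
  by rewrite (_ : proper_clique _ _) //; apply/andP; split; apply/forallP => -[].
rewrite sum_proper_clique_fcons factS mulrnA -sum_esym_outU1 -sumrMnl.
apply: eq_bigr => b _; under eq_bigr do rewrite weight_fcons.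
by rewrite -mulr_sumr IH mulrnAr.
Qed.

Lemma sum_proper_clique_head k (S : {set 'I_n}) (ps : 'I_n -> R) :
  \sum_(c : {ffun 'I_k.+1 -> 'I_n} | proper_clique S c) weight c * ps (c ord0) =
    \sum_(b | b \notin S) 'X_b * ps b * esym_out (b |: S) k *+ k`!.
Proof.
rewrite sum_proper_clique_fcons; apply: eq_bigr => b _.
under eq_bigr do rewrite weight_fcons fcons0 mulrAC.
by rewrite -mulr_sumr sum_proper_clique mulrnAr.
Qed.

End Colourings.

Section Graphs.
Variable n : nat.

Lemma proper_tail (V : finType) (e : rel V) (r : V) k (κ : {ffun V -> 'I_n})
    (t : {ffun 'I_k -> 'I_n}) :
  proper (tail_rel e r k) (fjoin κ t) = proper e κ && proper_path (κ r) t.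
Proof.
rewrite proper_fjoin /proper_path -[proper (@path_rel k) t]proper_sym_closure.
congr [&& _, _ & _]; apply/forallP/forallP => [/(_ r)/forallP Pr i|Pr a].
  apply/implyP => zi; have /implyP := Pr i.
  by rewrite [t i == _]eq_sym; apply; rewrite /= eqxx zi.
apply/forallP => i; apply/implyP; rewrite /= orbb => /andP[/eqP -> zi].
by have /implyP := Pr i; rewrite [κ r == _]eq_sym; apply.
Qed.

Lemma chrom_tail (V : finType) (e : rel V) (r : V) k :
  chrom (tail_rel e r k) n = \sum_(κ | proper e κ) weight κ * walkn k (fun=> 1) (κ r).
Proof.
rewrite chromE big_mkcond sum_fjoin [RHS]big_mkcond; apply: eq_bigr => κ _.
under eq_bigr do rewrite proper_tail weight_fjoin.
case: (proper e κ) => /=; last by rewrite big1.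
rewrite -sum_proper_path mulr_sumr [RHS]big_mkcond; apply: eq_bigr => t _.
by case: (proper_path _ t); rewrite ?mulr1.
Qed.

Lemma chrom_lollipop k h :
  chrom (lollipop_rel k.+1 h) n = xsum_esym (walkn h (fun=> 1)) k *+ k`!.
Proof.
rewrite chrom_tail (eq_bigl (proper_clique set0)) => [|c]; last first.
  by rewrite /proper_clique (_ : [forall i, _]) ?andbT //; apply/forallP => i; rewrite inE.
rewrite sum_proper_clique_head /xsum_esym -sumrMnl.
by apply: eq_big => [b|b _]; rewrite ?inE ?setU0.
Qed.

End Graphs.

Section Kgh.
Variable n : nat.
Variables (V : finType) (e : rel V) (r : V) (g h k : nat).
Local Notation E := (Kgh_rel e r g k.+2 h).
Implicit Types (κ : {ffun V -> 'I_n}) (t : {ffun 'I_g -> 'I_n}).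

Lemma tail_end_fjoin κ t a : tail_end r a -> fjoin κ t a = path_end (κ r) t.
Proof.
case: g t a => [|g'] t [u|[i lt_i]] /=; rewrite ?ffunE //; first by move/eqP->.
by move/eqP=> def_i; congr (t _); apply/val_inj.
Qed.

Lemma tail_end_exists : exists a : V + 'I_g, tail_end r a.
Proof. by case: g => [|g']; [exists (inl r) | exists (inr ord_max)]; rewrite /= eqxx. Qed.

Lemma proper_Kgh_cross κ t (c : {ffun 'I_k.+1 -> 'I_n}) (q : {ffun 'I_h -> 'I_n}) :
  [forall a, forall b, (E (inl a) (inr b) || E (inr b) (inl a)) ==> (fjoin κ t a != fjoin c q b)]
  = [forall j, c j \notin [set path_end (κ r) t]].
Proof.
apply/forallP/forallP => [Pcross j|Pc a]; rewrite ?inE.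
  have [a ta] := tail_end_exists; have /forallP/(_ (inl j))/implyP := Pcross a.
  by rewrite (tail_end_fjoin _ _ ta) ffunE eq_sym; apply; rewrite /Kgh_rel /= ta.
apply/forallP => -[j|p]; apply/implyP; rewrite /Kgh_rel /= ?orbF // orbb => ta.
by rewrite (tail_end_fjoin _ _ ta) ffunE eq_sym; have := Pc j; rewrite inE.
Qed.

Lemma proper_Kgh_lollipop (cq : {ffun 'I_k.+1 + 'I_h -> 'I_n}) :
  proper (fun x y => E (inr x) (inr y)) cq = proper (lollipop_rel k.+1 h) cq.
Proof.
rewrite -[RHS]proper_sym_closure; apply: eq_proper => -[i|p] [j|q].
all: by rewrite /Kgh_rel /lollipop_rel /tail_rel /complete_rel /= ?orbF ?orbb; exact: erefl.
Qed.

Lemma proper_Kgh κ t (c : {ffun 'I_k.+1 -> 'I_n}) (q : {ffun 'I_h -> 'I_n}) :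
  proper E (fjoin (fjoin κ t) (fjoin c q)) =
    [&& proper e κ, proper_path (κ r) t, proper_clique [set path_end (κ r) t] c
      & proper_path (c ord0) q].
Proof.
rewrite proper_fjoin proper_Kgh_cross proper_Kgh_lollipop.
rewrite proper_sym_closure !proper_tail /proper_clique /proper_path -!andbA.
by congr [&& _, _, _, _ & _]; rewrite [RHS]andbC andbA.
Qed.

Lemma sum_proper_clique_pendant (a : 'I_n) :
  \sum_(c : {ffun 'I_k.+1 -> 'I_n} | proper_clique [set a] c)
    \sum_(q : {ffun 'I_h -> 'I_n} | proper_path (c ord0) q) weight c * weight q
  = walk_esym (walkn h (fun=> 1)) k a *+ k`!.
Proof.
have pendant (c : {ffun 'I_k.+1 -> 'I_n}) :
    \sum_(q : {ffun 'I_h -> 'I_n} | proper_path (c ord0) q) weight c * weight q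
    = weight c * walkn h (fun=> 1) (c ord0).
  by rewrite -sum_proper_path mulr_sumr; apply: eq_bigr => q _; rewrite mulr1.
under eq_bigr do rewrite pendant.
rewrite sum_proper_clique_head /walk_esym -sumrMnl.
by apply: eq_big => [b|b _]; rewrite ?inE // setUC.
Qed.

Lemma chrom_Kgh :
  chrom E n =
    (\sum_(κ | proper e κ) weight κ * walkn g (walk_esym (walkn h (fun=> 1)) k) (κ r)) *+ k`!.
Proof.
rewrite chromE big_mkcond !sum_fjoin -sumrMnl [RHS]big_mkcond; apply: eq_bigr => κ _.
under eq_bigr => t _ do rewrite sum_fjoin.
under eq_bigr => t _ do under eq_bigr => c _ do under eq_bigr => q _ do
  rewrite proper_Kgh !weight_fjoin.
case: (proper e κ) => /=; last by rewrite big1 // => t _; rewrite big1 // => c _; rewrite big1.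
rewrite -mulrnAr -walknMn -sum_proper_path mulr_sumr [RHS]big_mkcond.
apply: eq_bigr => t _; case: (proper_path (κ r) t) => /=; last first.
  by rewrite big1 // => c _; rewrite big1.
rewrite -sum_proper_clique_pendant !mulr_sumr [RHS]big_mkcond; apply: eq_bigr => c _.
case: (proper_clique _ c) => /=; last by rewrite big1.
rewrite !mulr_sumr [RHS]big_mkcond; apply: eq_bigr => q _.
by case: (proper_path _ q); rewrite ?mulrA.
Qed.

Lemma walkn_walk_esym (a : 'I_n) :
  walkn g (walk_esym (walkn h (fun=> 1)) k) a =
    \sum_(i < k.+1) i.+1%:R * esym (k - i) * walkn (g + h + i.+1) (fun=> 1) a
    - k%:R * \sum_(i < k.+1) xsum_esym (walkn h (fun=> 1)) i * walkn (k - i + g) (fun=> 1) a.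
Proof.
rewrite (eq_walkn _ _ (walk_esymE k _)) /walk_esym_formula walknB walknZ !walkn_sum.
congr (_ - _ * _); apply: eq_bigr => i _; rewrite walknZ walkn_walkn.
  by rewrite walkn_walkn addnAC.
by rewrite addnC.
Qed.

Lemma sum_tail_terms :
  \sum_(1 <= z < k.+2) ((z%:R : rat) *:
      (mesym n rat (k.+2 - 1 - z) * chrom (tail_rel e r (g + h + z)) n))
  = \sum_(κ | proper e κ) weight κ *
      \sum_(i < k.+1) i.+1%:R * esym (k - i) * walkn (g + h + i.+1) (fun=> 1) (κ r).
Proof.
rewrite big_add1 big_mkord; under [RHS]eq_bigr do rewrite mulr_sumr.
rewrite exchange_big; apply: eq_bigr => i _.
rewrite chrom_tail mesym_esym_out scaler_nat mulr_sumr -sumrMnl /=.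
by apply: eq_bigr => κ _; rewrite subSS subn0 subSS -mulr_natl; ring.
Qed.

Lemma sum_lollipop_terms :
  \sum_(1 <= z < k.+2) ((((z - 1)`!)%:R : rat)^-1 *:
      (chrom (lollipop_rel z h) n * chrom (tail_rel e r (k.+2 - 1 - z + g)) n))
  = \sum_(κ | proper e κ) weight κ *
      \sum_(i < k.+1) xsum_esym (walkn h (fun=> 1)) i * walkn (k - i + g) (fun=> 1) (κ r).
Proof.
rewrite big_add1 big_mkord; under [RHS]eq_bigr do rewrite mulr_sumr.
rewrite exchange_big; apply: eq_bigr => i _.
rewrite chrom_lollipop subn1 mulrnAl scale_invfact_mulrn chrom_tail mulr_sumr.
by apply: eq_bigr => κ _; rewrite subSS subn0 subSS; ring.
Qed.

End Kgh.

Theorem theorem5p2 (V : finType) (e : rel V) (r : V)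
  (e_sym : ssrbool.symmetric e) (e_irr : irreflexive e) (g h m : nat) (m_ge2 : (2 <= m)%N)
  (n : nat) :
  ((((m - 2)`!)%:R : rat)^-1) *: chrom (Kgh_rel e r g m h) n =
    \sum_(1 <= z < m) ((z%:R : rat) *:
        (mesym n rat (m - 1 - z) * chrom (tail_rel e r (g + h + z)) n))
  - ((m - 2)%:R : rat) *:
    \sum_(1 <= z < m) ((((z - 1)`!)%:R : rat)^-1 *:
        (chrom (lollipop_rel z h) n * chrom (tail_rel e r (m - 1 - z + g)) n)).
Proof.
case: m m_ge2 => [|[|k]] // _.
rewrite chrom_Kgh sum_tail_terms sum_lollipop_terms !subSS subn0.
rewrite scale_invfact_mulrn scaler_nat -mulr_natl mulr_sumr -sumrB.
by apply: eq_bigr => κ _; rewrite walkn_walk_esym; ring.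
Qed.
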